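(* Let $(X,d,\kappa)$ be a digital metric space with more than one point. Suppose there exist $x_0,y_0 \in X$ such that $d(x_0,y_0) = \min\{d(x,y) : x,y \in X,\ d(x,y) > 0\}$. Then there is no function $T: X \to X$ that is both onto and a digital expansive mapping.
   Context: A digital metric space is a triple $(X,d,\kappa)$ with $X\subset\mathbb{Z}^n$, $\kappa$ an adjacency relation on $X$, and $d$ a metric on $X$. A function $T: X \to X$ is a digital expansive mapping if there exists $k > 1$ such that $d(T(x),T(y)) \ge k\,d(x,y)$ for all $x,y \in X$. *)

(* points of Z^n are row vectors 'rV[int]_n; the metric is
   valued in an arbitrary real number type R : realType. *)
From HB Require Import structures.
From mathcomp Require Import all_boot all_order all_algebra.
From mathcomp Require Import reals.
Set Implicit Arguments. Unset Strict Implicit. Unset Printing Implicit Defensive.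
Import Order.TTheory GRing.Theory Num.Theory.
Local Open Scope ring_scope.

Definition is_metric_on (R : realType) (n : nat) (X : 'rV[int]_n -> Prop)
    (d : 'rV[int]_n -> 'rV[int]_n -> R) : Prop :=
  (forall x y, X x -> X y -> 0 <= d x y) /\
  (forall x y, X x -> X y -> (d x y = 0 <-> x = y)) /\
  (forall x y, X x -> X y -> d x y = d y x) /\
  (forall x y z, X x -> X y -> X z -> d x z <= d x y + d y z).

Definition is_adjacency_on (n : nat) (X : 'rV[int]_n -> Prop)
    (kappa : 'rV[int]_n -> 'rV[int]_n -> Prop) : Prop :=
  (forall x, X x -> ~ kappa x x) /\
  (forall x y, X x -> X y -> kappa x y -> kappa y x).

Definition digital_metric_space (R : realType) (n : nat) (X : 'rV[int]_n -> Prop)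
    (d : 'rV[int]_n -> 'rV[int]_n -> R) (kappa : 'rV[int]_n -> 'rV[int]_n -> Prop) : Prop :=
  is_metric_on X d /\ is_adjacency_on X kappa.

Definition maps_into (n : nat) (X : 'rV[int]_n -> Prop) (T : 'rV[int]_n -> 'rV[int]_n) : Prop :=
  forall x, X x -> X (T x).

Definition onto_on (n : nat) (X : 'rV[int]_n -> Prop) (T : 'rV[int]_n -> 'rV[int]_n) : Prop :=
  forall y, X y -> exists x, X x /\ T x = y.

Definition digital_expansive (R : realType) (n : nat) (X : 'rV[int]_n -> Prop)
    (d : 'rV[int]_n -> 'rV[int]_n -> R) (T : 'rV[int]_n -> 'rV[int]_n) : Prop :=
  exists k : R, 1 < k /\ forall x y, X x -> X y -> k * d x y <= d (T x) (T y).

Definition is_min_pos_dist (R : realType) (n : nat) (X : 'rV[int]_n -> Prop)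
    (d : 'rV[int]_n -> 'rV[int]_n -> R) (x0 y0 : 'rV[int]_n) : Prop :=
  X x0 /\ X y0 /\ 0 < d x0 y0 /\
  (forall x y, X x -> X y -> 0 < d x y -> d x0 y0 <= d x y).

From HB Require Import structures.
From mathcomp Require Import all_boot all_order all_algebra.
From mathcomp Require Import reals.
Import Order.TTheory GRing.Theory Num.Theory.
Local Open Scope ring_scope.

(* Pull a pair at positive distance back along the onto map T: the preimages
   are again at positive distance, and expansiveness makes that distance
   strictly smaller.  So no positive distance can be minimal. *)

Section OntoExpansive.
Local Set Implicit Arguments. Local Unset Strict Implicit.

Variables (R : numDomainType) (A : Type) (X : A -> Prop) (d : A -> A -> R).
Hypothesis d_ge0 : forall x y, X x -> X y -> 0 <= d x y.
Hypothesis d_eq0 : forall x y, X x -> X y -> d x y = 0 <-> x = y.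

Lemma dist_gt0 x y : X x -> X y -> 0 < d x y <-> x <> y.
Proof.
move=> Xx Xy; split=> [dxy_gt0 eq_xy | neq_xy].
  by move: dxy_gt0; rewrite eq_xy (proj2 (d_eq0 Xy Xy)) ?ltxx.
by rewrite lt0r d_ge0 // andbT; apply/eqP => /(d_eq0 Xx Xy).
Qed.

Lemma expansive_dist_lt (T : A -> A) (k : R) (a b : A) :
  1 < k -> 0 < d a b -> k * d a b <= d (T a) (T b) -> d a b < d (T a) (T b).
Proof. by move=> k_gt1 dab_gt0; apply: lt_le_trans; rewrite ltr_pMl. Qed.

Lemma onto_expansive_smaller_pos_dist (T : A -> A) (k : R) :
  (forall y, X y -> exists x, X x /\ T x = y) -> 1 < k ->
  (forall x y, X x -> X y -> k * d x y <= d (T x) (T y)) ->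
  forall x0 y0, X x0 -> X y0 -> 0 < d x0 y0 ->
  exists a b, [/\ X a, X b, 0 < d a b & d a b < d x0 y0].
Proof.
move=> T_onto k_gt1 T_expand x0 y0 Xx0 Xy0 d0_gt0.
have [a [Xa Ta]] := T_onto x0 Xx0; have [b [Xb Tb]] := T_onto y0 Xy0.
have dab_gt0 : 0 < d a b.
  apply/dist_gt0 => // eq_ab; move/dist_gt0: d0_gt0; apply=> //.
  by rewrite -Ta -Tb eq_ab.
exists a, b; split=> //; rewrite -Ta -Tb.
exact: expansive_dist_lt k_gt1 dab_gt0 (T_expand a b Xa Xb).
Qed.

End OntoExpansive.

Theorem mainTheorem9 (R : realType) (n : nat) (X : 'rV[int]_n -> Prop)
    (d : 'rV[int]_n -> 'rV[int]_n -> R) (kappa : 'rV[int]_n -> 'rV[int]_n -> Prop) :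
  digital_metric_space X d kappa ->
  (exists x y, X x /\ X y /\ x <> y) ->
  (exists x0 y0, is_min_pos_dist X d x0 y0) ->
  ~ (exists T : 'rV[int]_n -> 'rV[int]_n,
       maps_into X T /\ onto_on X T /\ digital_expansive X d T).
Proof.
move=> [[d_ge0 [d_eq0 _]] _] _ [x0 [y0 [Xx0 [Xy0 [d0_gt0 d0_min]]]]].
move=> [T [_ [T_onto [k [k_gt1 T_expand]]]]].
have [a [b [Xa Xb dab_gt0 dab_lt]]] :=
  onto_expansive_smaller_pos_dist d_ge0 d_eq0 T_onto k_gt1 T_expand Xx0 Xy0 d0_gt0.
by move: (d0_min a b Xa Xb dab_gt0); rewrite leNgt dab_lt.
Qed.
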